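(* Consider the deterministic crowd-learning system described in the context, with $N\ge 2$ PoIs and reward rate $\beta>0$. Let $\overline{\Delta}_{\max}^{(\beta)}$ be the average maximum age when every user acts selfishly, and $\overline{\Delta}_{\max}^{(\mathrm{OPT})}$ the minimum average maximum age over all admissible assignment policies. Then the price of anarchy $$\rho(\beta)\triangleq 1-\frac{\overline{\Delta}_{\max}^{(\mathrm{OPT})}}{\overline{\Delta}_{\max}^{(\beta)}}$$ satisfies $$\rho(\beta)\le \frac{p_{\max}}{(N-1)\beta+p_{\max}}=O(1/\beta).$$
   Context: Deterministic crowd-learning model. There are $N\ge 2$ points of interest (PoIs), indexed $n=1,\dots,N$, and time is slotted, $t=0,1,2,\dots$. Each PoI $n$ has a price $p_n[t]\in[p_{\min},p_{\max}]$, where $0<p_{\min}\le p_{\max}$; the price sequence may be arbitrary. The service provider keeps a recorded price $r_n[t]$ for each PoI, with $r_n[0]\in[p_{\min},p_{\max}]$. Each PoI also has an age $\Delta_n[t]\in\{0,1,2,\dots\}$, with finite initial values $\Delta_n[0]$. In every slot exactly one user arrives. That user selects a single PoI, and we write $S_n[t]=1$ if PoI $n$ is selected in slot $t$ and $S_n[t]=0$ otherwise, so that $\sum_n S_n[t]=1$. The selected PoI's record is refreshed: $r_n[t+1]=p_n[t]$ if $S_n[t]=1$, and $r_n[t+1]=r_n[t]$ otherwise. Ages evolve as $$\Delta_n[t+1]=(\Delta_n[t]+1)(1-S_n[t]).$$ Selfish behavior with reward rate $\beta>0$: the user in slot $t$ selects $$n^*[t]\in\arg\max_{n}\big(\beta\Delta_n[t]-r_n[t]\big),$$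 with ties broken arbitrarily. An admissible policy is any rule that, in each slot, chooses the single PoI for that slot's user based on the past history. The average maximum age of a policy is $$\overline{\Delta}_{\max}=\limsup_{T\to\infty}\frac1T\sum_{t=0}^{T-1}\mathbb{E}\Big[\max_n\Delta_n[t]\Big].$$ $\overline{\Delta}_{\max}^{(\beta)}$ denotes this quantity under selfish behavior, and $\overline{\Delta}_{\max}^{(\mathrm{OPT})}$ its infimum over admissible policies. *)

From Stdlib Require Import Reals Lra Lia Arith List.
Open Scope R_scope.

(* PoIs are indexed by n < N (0-based); a selection sequence sel : nat -> nat
   gives the PoI chosen in slot t (must satisfy sel t < N). *)

(* Age dynamics: Delta_n[t+1] = (Delta_n[t]+1)(1 - S_n[t]). *)
Fixpoint age (D0 : nat -> nat) (sel : nat -> nat) (t : nat) (n : nat) : nat :=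
  match t with
  | O => D0 n
  | S t' => if Nat.eqb (sel t') n then 0%nat else S (age D0 sel t' n)
  end.

(* Recorded prices: r_n[t+1] = p_n[t] if selected, r_n[t] otherwise. *)
Fixpoint recp (r0 : nat -> R) (p : nat -> nat -> R) (sel : nat -> nat)
  (t : nat) (n : nat) : R :=
  match t with
  | O => r0 n
  | S t' => if Nat.eqb (sel t') n then p t' n else recp r0 p sel t' n
  end.

Definition max_age (N : nat) (D0 : nat -> nat) (sel : nat -> nat) (t : nat) : nat :=
  fold_right Nat.max 0%nat (map (age D0 sel t) (seq 0 N)).

Fixpoint rsum (u : nat -> R) (T : nat) : R :=
  match T with
  | O => 0
  | S T' => rsum u T' + u T'
  end.

(* (1/T) sum_{t=0}^{T-1} max_n Delta_n[t]  (deterministic: no expectation) *)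
Definition avg_max_age (N : nat) (D0 : nat -> nat) (sel : nat -> nat) (T : nat) : R :=
  rsum (fun t => INR (max_age N D0 sel t)) T / INR T.

Definition is_limsup (u : nat -> R) (L : R) : Prop :=
  forall eps : R, eps > 0 ->
    (exists M : nat, forall n : nat, (n >= M)%nat -> u n <= L + eps) /\
    (forall M : nat, exists n : nat, (n >= M)%nat /\ u n >= L - eps).

Definition is_inf (S : R -> Prop) (L : R) : Prop :=
  (forall x, S x -> L <= x) /\ (forall y, (forall x, S x -> y <= x) -> y <= L).

Definition admissible (N : nat) (sel : nat -> nat) : Prop :=
  forall t : nat, (sel t < N)%nat.

(* sel is a selfish trajectory: in every slot the chosen PoI maximizes
   beta*Delta_n[t] - r_n[t] (ties broken arbitrarily). *)
Definition selfish (N : nat) (beta : R) (D0 : nat -> nat) (r0 : nat -> R)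
  (p : nat -> nat -> R) (sel : nat -> nat) : Prop :=
  admissible N sel /\
  forall t m : nat, (m < N)%nat ->
    beta * INR (age D0 sel t m) - recp r0 p sel t m
      <= beta * INR (age D0 sel t (sel t)) - recp r0 p sel t (sel t).

Definition achievable (N : nat) (D0 : nat -> nat) (L : R) : Prop :=
  exists sel, admissible N sel /\ is_limsup (avg_max_age N D0 sel) L.

From Stdlib Require Import Reals Lra Lia Arith List Classical.
From Coquelicot Require Import Coquelicot.
Open Scope R_scope.

(* Write c = N - 1.  The proof compares both average maximum ages with c.
   - Lower bound (any admissible policy): among N - 1 consecutive slots some
     PoI is never selected, so from slot N - 1 on the maximum age is >= c,
     and hence every achievable average maximum age is >= c.
   - Optimum: round robin keeps the maximum age equal to c, so the infimum
     over admissible policies is exactly c.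
   - Upper bound (selfish users): a selfish user never picks a PoI that is
     k + 1 slots younger than another one, where (k+1) beta > pmax - pmin;
     a counting argument then bounds every age by c + k eventually, and so
     beta * Delta^(beta) <= beta * c + (pmax - pmin).
   The averages are controlled by a Cesaro-type lemma (eventual bounds on a
   sequence are eventual bounds on its running means, up to any eps), and
   the finite limsup of the selfish averages exists because they are
   eventually bounded. *)

Lemma age_unselected D0 sel n s d :
  (forall u, (s <= u < s + d)%nat -> sel u <> n) ->
  age D0 sel (s + d) n = (age D0 sel s n + d)%nat.
Proof.
  induction d as [|d IH]; intros Hfree.
  - rewrite Nat.add_0_r; lia.
  - replace (s + S d)%nat with (S (s + d)) by lia. cbn [age].
    destruct (Nat.eqb_spec (sel (s + d)%nat) n) as [E|E].
    + exfalso; apply (Hfree (s + d)%nat); [lia | exact E].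
    + rewrite IH; [lia |]. intros u Hu; apply Hfree; lia.
Qed.

Lemma age_since_selection D0 sel n s t :
  sel s = n -> (s < t)%nat -> (age D0 sel t n <= t - s - 1)%nat.
Proof.
  intros Hs. induction t as [|t IH]; intros Ht; [lia |]. cbn [age].
  destruct (Nat.eqb_spec (sel t) n) as [E|E]; [lia |].
  assert (s <> t) by (intros ->; contradiction).
  specialize (IH ltac:(lia)). lia.
Qed.

Lemma recp_in_range N pmin pmax (p : nat -> nat -> R) r0 sel :
  (forall t n, (n < N)%nat -> pmin <= p t n <= pmax) ->
  (forall n, (n < N)%nat -> pmin <= r0 n <= pmax) ->
  forall t n, (n < N)%nat -> pmin <= recp r0 p sel t n <= pmax.
Proof.
  intros Hp Hr t. induction t as [|t IH]; intros n Hn; simpl; auto.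
  destruct (Nat.eqb (sel t) n); auto.
Qed.

Lemma max_age_ge N D0 sel t n :
  (n < N)%nat -> (age D0 sel t n <= max_age N D0 sel t)%nat.
Proof.
  intros Hn. unfold max_age.
  pose proof (proj1 (list_max_le (map (age D0 sel t) (seq 0 N)) _) (le_n _)) as Hall.
  rewrite Forall_forall in Hall. apply Hall, in_map, in_seq. lia.
Qed.

Lemma max_age_le N D0 sel t B :
  (forall n, (n < N)%nat -> (age D0 sel t n <= B)%nat) -> (max_age N D0 sel t <= B)%nat.
Proof.
  intros Hle. unfold max_age. apply list_max_le, Forall_forall.
  intros x Hx. apply in_map_iff in Hx as [n [<- Hn]]. apply in_seq in Hn. apply Hle; lia.
Qed.

Lemma missing_index N (L : list nat) :
  (length L < N)%nat -> exists n, (n < N)%nat /\ ~ In n L.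
Proof.
  intros Hlen. apply NNPP. intros Hnone.
  assert (Hincl : incl (seq 0 N) L).
  { intros x Hx. apply in_seq in Hx. apply NNPP. intros Hnot.
    apply Hnone. exists x. split; [lia | exact Hnot]. }
  pose proof (NoDup_incl_length (seq_NoDup N 0) Hincl). rewrite length_seq in *. lia.
Qed.

(* Under any admissible policy the maximum age is >= N - 1 from slot N - 1 on:
   some PoI was not selected in the last N - 1 slots. *)
Lemma max_age_lower_bound N D0 sel :
  admissible N sel -> (1 <= N)%nat ->
  forall t, (N - 1 <= t)%nat -> (N - 1 <= max_age N D0 sel t)%nat.
Proof.
  intros Had HN t Ht.
  destruct (missing_index N (map sel (seq (t - (N - 1)) (N - 1))))
    as [n [Hn Hmiss]]; [rewrite length_map, length_seq; lia |].
  eapply Nat.le_trans; [| apply (max_age_ge N D0 sel t n Hn)].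
  replace t with ((t - (N - 1)) + (N - 1))%nat at 1 by lia.
  rewrite age_unselected; [lia |].
  intros u Hu E. apply Hmiss, in_map_iff. exists u. split; [exact E | apply in_seq; lia].
Qed.

Lemma round_robin_max_age N D0 :
  (1 <= N)%nat -> forall t, (N <= t)%nat ->
  max_age N D0 (fun u => u mod N) t = (N - 1)%nat.
Proof.
  intros HN t Ht.
  assert (Hrecent : forall n, (n < N)%nat ->
            exists s, (t - N <= s < t)%nat /\ s mod N = n).
  { intros n Hn. pose proof (Nat.div_mod_eq (t - N) N).
    pose proof (Nat.mod_upper_bound (t - N) N ltac:(lia)).
    destruct (Nat.le_gt_cases ((t - N) mod N) n).
    - exists (n + (t - N) / N * N)%nat. rewrite Nat.Div0.mod_add, Nat.mod_small; lia.
    - exists (n + ((t - N) / N + 1) * N)%nat. rewrite Nat.Div0.mod_add, Nat.mod_small; lia. }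
  apply Nat.le_antisymm.
  - apply max_age_le. intros n Hn. destruct (Hrecent n Hn) as [s [Hs Es]].
    pose proof (age_since_selection D0 (fun u => u mod N) n s t Es ltac:(lia)). lia.
  - apply max_age_lower_bound; [intros u; apply Nat.mod_upper_bound | |]; lia.
Qed.

Section Selfish.

Variables (N : nat) (pmin pmax beta : R) (p : nat -> nat -> R) (r0 : nat -> R)
  (D0 : nat -> nat) (sel : nat -> nat).
Hypothesis hbeta : 0 < beta.
Hypothesis hprice : forall t n, (n < N)%nat -> pmin <= p t n <= pmax.
Hypothesis hr0 : forall n, (n < N)%nat -> pmin <= r0 n <= pmax.
Hypothesis hsel : selfish N beta D0 r0 p sel.

Lemma selfish_no_much_younger_pick k j m :
  pmax - pmin < INR (S k) * beta -> (m < N)%nat ->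
  (age D0 sel j (sel j) + k + 1 <= age D0 sel j m)%nat -> False.
Proof.
  intros Hk Hm Hold. destruct hsel as [Had Hbest].
  pose proof (Hbest j m Hm) as Hpick.
  pose proof (recp_in_range N pmin pmax p r0 sel hprice hr0 j m Hm).
  pose proof (recp_in_range N pmin pmax p r0 sel hprice hr0 j (sel j) (Had j)).
  apply le_INR in Hold. rewrite !plus_INR in Hold. simpl in Hold. rewrite S_INR in Hk.
  assert (beta * (INR (age D0 sel j (sel j)) + INR k + 1)
          <= beta * INR (age D0 sel j m)) by (apply Rmult_le_compat_l; lra).
  nra.
Qed.

(* Otherwise some PoI m
   stayed unselected for N + k slots; in the last N of them the selections
   are pairwise distinct (a repeat would be much younger than m), which
   together with m gives N + 1 distinct PoIs. *)
Lemma selfish_age_bound k t m :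
  pmax - pmin < INR (S k) * beta -> (N + k <= t)%nat -> (m < N)%nat ->
  (age D0 sel t m <= N - 1 + k)%nat.
Proof.
  intros Hk Ht Hm. pose proof (proj1 hsel) as Had.
  destruct (Nat.le_gt_cases (age D0 sel t m) (N - 1 + k)) as [|Hold]; [assumption | exfalso].
  set (t0 := (t - (N + k))%nat).
  assert (Hfree : forall u, (t0 <= u < t)%nat -> sel u <> m).
  { intros u Hu E. pose proof (age_since_selection D0 sel m u t E ltac:(lia)).
    unfold t0 in *. lia. }
  assert (Hrepeat : forall i j, (t0 + k <= i)%nat -> (i < j)%nat -> (j < t0 + k + N)%nat ->
                      sel i <> sel j).
  { intros i j Hi Hij Hj E.
    apply (selfish_no_much_younger_pick k j m Hk Hm).
    pose proof (age_since_selection D0 sel (sel j) i j E Hij).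
    assert (Hmj : age D0 sel (t0 + (j - t0)) m = (age D0 sel t0 m + (j - t0))%nat).
    { apply age_unselected. intros u Hu; apply Hfree; unfold t0 in *; lia. }
    replace (t0 + (j - t0))%nat with j in Hmj by lia. lia. }
  assert (Hnodup : NoDup (m :: map sel (seq (t0 + k) N))).
  { constructor.
    - intros Hin. apply in_map_iff in Hin as [u [Eu Hu]]. apply in_seq in Hu.
      apply (Hfree u); [unfold t0 in *; lia | exact Eu].
    - apply NoDup_map_NoDup_ForallPairs; [| apply seq_NoDup].
      intros i j Hi Hj E. apply in_seq in Hi, Hj.
      destruct (Nat.lt_total i j) as [Hij | [Hij | Hij]]; [| exact Hij |].
      + exfalso. apply (Hrepeat i j); lia.
      + exfalso. apply (Hrepeat j i); [lia | lia | lia | congruence]. }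
  assert (Hincl : incl (m :: map sel (seq (t0 + k) N)) (seq 0 N)).
  { intros x [<- | Hx]; apply in_seq; [lia |].
    apply in_map_iff in Hx as [u [<- _]]. pose proof (Had u); lia. }
  pose proof (NoDup_incl_length Hnodup Hincl) as Hlen.
  simpl in Hlen. rewrite length_map, !length_seq in Hlen. lia.
Qed.

(* Choosing k = floor((pmax - pmin) / beta): eventually the maximum age under
   selfish behaviour is at most N - 1 + k, with k beta <= pmax - pmin. *)
Lemma selfish_max_age_eventually (hp : pmin <= pmax) :
  exists k : nat, INR k * beta <= pmax - pmin /\
    forall t, (N + k <= t)%nat -> (max_age N D0 sel t <= N - 1 + k)%nat.
Proof.
  assert (Hx : 0 <= (pmax - pmin) / beta) by (apply Rdiv_le_0_compat; lra).
  destruct (nfloor_ex _ Hx) as [k [Hlo Hhi]].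
  exists k. split.
  - apply Rle_div_r in Hlo; lra.
  - intros t Ht. apply max_age_le. intros m Hm. apply selfish_age_bound; [| lia | exact Hm].
    rewrite S_INR. apply Rlt_div_l in Hhi; lra.
Qed.

End Selfish.

Definition ev_upper (u : nat -> R) (b : R) : Prop :=
  forall eps, eps > 0 -> exists M, forall n, (n >= M)%nat -> u n <= b + eps.

Definition ev_lower (u : nat -> R) (a : R) : Prop :=
  forall eps, eps > 0 -> exists M, forall n, (n >= M)%nat -> a - eps <= u n.

Lemma rsum_tail_upper f M b :
  (forall t, (M <= t)%nat -> f t <= b) ->
  forall d, rsum f (M + d) <= rsum f M + INR d * b.
Proof.
  intros Hb d. induction d as [|d IH].
  - rewrite Nat.add_0_r; simpl; lra.
  - replace (M + S d)%nat with (S (M + d)) by lia. simpl rsum. rewrite S_INR.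
    specialize (Hb (M + d)%nat ltac:(lia)). lra.
Qed.

Lemma rsum_opp f T : rsum (fun t => - f t) T = - rsum f T.
Proof. induction T as [|T IH]; simpl; [lra | rewrite IH; lra]. Qed.

Lemma cesaro_upper f M b :
  (forall t, (M <= t)%nat -> f t <= b) -> ev_upper (fun T => rsum f T / INR T) b.
Proof.
  intros Hb eps Heps.
  destruct (INR_archimed eps (Rabs (rsum f M - INR M * b)) Heps) as [n Hn].
  exists (Nat.max (S M) n). intros T HT.
  apply Rle_div_l; [apply lt_0_INR; lia |].
  pose proof (rsum_tail_upper f M b Hb (T - M)) as Htail.
  replace (M + (T - M))%nat with T in Htail by lia.
  rewrite minus_INR in Htail by lia.
  pose proof (Rle_abs (rsum f M - INR M * b)).
  assert (INR n * eps <= INR T * eps) by (apply Rmult_le_compat_r; [lra | apply le_INR; lia]).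
  nra.
Qed.

Lemma cesaro_lower f M a :
  (forall t, (M <= t)%nat -> a <= f t) -> ev_lower (fun T => rsum f T / INR T) a.
Proof.
  intros Ha eps Heps.
  destruct (cesaro_upper (fun t => - f t) M (- a) ltac:(intros t Ht; specialize (Ha t Ht); lra)
              eps Heps) as [M' HM'].
  exists M'. intros T HT. specialize (HM' T HT). rewrite rsum_opp, Rdiv_opp_l in HM'. lra.
Qed.

Lemma limsup_le u L b : is_limsup u L -> ev_upper u b -> L <= b.
Proof.
  intros HL Hb. destruct (Rle_dec L b) as [|Hgt]; [assumption | exfalso].
  destruct (Hb ((L - b) / 3) ltac:(lra)) as [M HM].
  destruct (proj2 (HL ((L - b) / 3) ltac:(lra)) M) as [n [Hn Hun]].
  specialize (HM n Hn). lra.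
Qed.

Lemma limsup_ge u L a : is_limsup u L -> ev_lower u a -> a <= L.
Proof.
  intros HL Ha. destruct (Rle_dec a L) as [|Hgt]; [assumption | exfalso].
  destruct (Ha ((a - L) / 3) ltac:(lra)) as [M HM].
  destruct (proj1 (HL ((a - L) / 3) ltac:(lra))) as [M' HM'].
  specialize (HM (Nat.max M M') ltac:(lia)). specialize (HM' (Nat.max M M') ltac:(lia)). lra.
Qed.

Lemma limsup_of_lim u c : ev_upper u c -> ev_lower u c -> is_limsup u c.
Proof.
  intros Hu Hl eps Heps. split; [exact (Hu eps Heps) |].
  intros M. destruct (Hl eps Heps) as [M' HM']. exists (Nat.max M M').
  split; [lia |]. specialize (HM' (Nat.max M M') ltac:(lia)). lra.
Qed.

Lemma limsup_exists u a b : ev_upper u b -> ev_lower u a -> exists L, is_limsup u L.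
Proof.
  intros Hu Hl. destruct (ex_LimSup_seq u) as [[L | |] HL].
  - exists L. intros eps Heps. destruct (HL (mkposreal eps Heps)) as [Hoften Hev]. simpl in *.
    split.
    + destruct Hev as [M HM]. exists M. intros n Hn. specialize (HM n Hn). lra.
    + intros M. destruct (Hoften M) as [n [Hn Hun]]. exists n. split; [lia | lra].
  - exfalso. destruct (Hu 1 ltac:(lra)) as [M HM].
    destruct (HL (b + 1) M) as [n [Hn Hun]]. specialize (HM n Hn). lra.
  - exfalso. destruct (Hl 1 ltac:(lra)) as [M HM]. destruct (HL (a - 1)) as [M' HM'].
    specialize (HM (Nat.max M M') ltac:(lia)). specialize (HM' (Nat.max M M') ltac:(lia)). lra.
Qed.

Lemma avg_max_age_lower N D0 sel :
  admissible N sel -> (1 <= N)%nat -> ev_lower (avg_max_age N D0 sel) (INR (N - 1)).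
Proof.
  intros Had HN. apply (cesaro_lower _ (N - 1)). intros t Ht.
  apply le_INR, max_age_lower_bound; assumption.
Qed.

Lemma achievable_ge N D0 L : (1 <= N)%nat -> achievable N D0 L -> INR (N - 1) <= L.
Proof.
  intros HN [s [Hs HL]]. exact (limsup_ge _ _ _ HL (avg_max_age_lower N D0 s Hs HN)).
Qed.

Lemma round_robin_achievable N D0 : (1 <= N)%nat -> achievable N D0 (INR (N - 1)).
Proof.
  intros HN. exists (fun u => u mod N). split; [intros u; apply Nat.mod_upper_bound; lia |].
  assert (Hconst : forall t, (N <= t)%nat ->
            INR (max_age N D0 (fun u => u mod N) t) = INR (N - 1))
    by (intros t Ht; rewrite round_robin_max_age; auto).
  apply limsup_of_lim.
  - apply (cesaro_upper _ N). intros t Ht. rewrite Hconst; [lra | exact Ht].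
  - apply (cesaro_lower _ N). intros t Ht. rewrite Hconst; [lra | exact Ht].
Qed.

Lemma opt_value N D0 : (1 <= N)%nat -> is_inf (achievable N D0) (INR (N - 1)).
Proof.
  intros HN. split.
  - intros L HL. exact (achievable_ge N D0 L HN HL).
  - intros y Hy. exact (Hy _ (round_robin_achievable N D0 HN)).
Qed.

Section SelfishAverage.

Variables (N : nat) (pmin pmax beta : R) (p : nat -> nat -> R) (r0 : nat -> R)
  (D0 : nat -> nat) (sel : nat -> nat).
Hypothesis hN : (1 <= N)%nat.
Hypothesis hp : pmin <= pmax.
Hypothesis hbeta : 0 < beta.
Hypothesis hprice : forall t n, (n < N)%nat -> pmin <= p t n <= pmax.
Hypothesis hr0 : forall n, (n < N)%nat -> pmin <= r0 n <= pmax.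
Hypothesis hsel : selfish N beta D0 r0 p sel.

Lemma selfish_avg_upper :
  exists b, beta * b <= beta * INR (N - 1) + (pmax - pmin) /\
            ev_upper (avg_max_age N D0 sel) b.
Proof.
  destruct (selfish_max_age_eventually N pmin pmax beta p r0 D0 sel hbeta hprice hr0 hsel hp)
    as [k [Hk Hev]].
  exists (INR (N - 1 + k)). split.
  - rewrite plus_INR. lra.
  - apply (cesaro_upper _ (N + k)). intros t Ht. apply le_INR, Hev, Ht.
Qed.

Lemma selfish_limsup_exists : exists Lsel, is_limsup (avg_max_age N D0 sel) Lsel.
Proof.
  destruct selfish_avg_upper as [b [_ Hb]].
  exact (limsup_exists _ _ _ Hb (avg_max_age_lower N D0 sel (proj1 hsel) hN)).
Qed.

Lemma selfish_limsup_le Lsel :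
  is_limsup (avg_max_age N D0 sel) Lsel ->
  beta * Lsel <= beta * INR (N - 1) + (pmax - pmin).
Proof.
  intros HL. destruct selfish_avg_upper as [b [Hbound Hb]].
  pose proof (limsup_le _ _ _ HL Hb).
  assert (beta * Lsel <= beta * b) by (apply Rmult_le_compat_l; lra). lra.
Qed.

End SelfishAverage.

Lemma poa_ratio_bound (c beta pmax Lsel Lopt : R) :
  0 < c -> 0 < beta -> 0 <= pmax -> c <= Lopt -> c <= Lsel ->
  beta * Lsel <= beta * c + pmax ->
  1 - Lopt / Lsel <= pmax / (c * beta + pmax).
Proof.
  intros Hc Hb Hp Hopt Hsel Hup.
  set (q := Lopt / Lsel).
  assert (Hq : q * Lsel = Lopt) by (unfold q; field; lra).
  assert (Hq0 : 0 <= q) by (unfold q; apply Rdiv_le_0_compat; lra).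
  apply Rle_div_r; [nra |].
  assert (q * (beta * Lsel) <= q * (c * beta + pmax)) by (apply Rmult_le_compat_l; lra).
  nra.
Qed.

Theorem theorem1 (N : nat) (pmin pmax beta : R)
  (p : nat -> nat -> R) (r0 : nat -> R) (D0 : nat -> nat) (sel : nat -> nat)
  (hN : (2 <= N)%nat) (hpmin : 0 < pmin) (hp : pmin <= pmax) (hbeta : 0 < beta)
  (hprice : forall t n, (n < N)%nat -> pmin <= p t n <= pmax)
  (hr0 : forall n, (n < N)%nat -> pmin <= r0 n <= pmax)
  (hsel : selfish N beta D0 r0 p sel) :
  (exists Lsel, is_limsup (avg_max_age N D0 sel) Lsel) /\
  (exists Lopt, is_inf (achievable N D0) Lopt) /\
  (forall Lsel Lopt,
     is_limsup (avg_max_age N D0 sel) Lsel ->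
     is_inf (achievable N D0) Lopt ->
     1 - Lopt / Lsel <= pmax / (INR (N - 1) * beta + pmax)).
Proof.
  assert (hN1 : (1 <= N)%nat) by lia.
  split; [| split].
  - exact (selfish_limsup_exists N pmin pmax beta p r0 D0 sel hN1 hp hbeta hprice hr0 hsel).
  - exists (INR (N - 1)). exact (opt_value N D0 hN1).
  - intros Lsel Lopt HLsel HLopt.
    apply poa_ratio_bound; [apply lt_0_INR; lia | exact hbeta | lra | | |].
    +
      apply (proj2 HLopt). intros L HL. exact (achievable_ge N D0 L hN1 HL).
    + exact (achievable_ge N D0 Lsel hN1 (ex_intro _ sel (conj (proj1 hsel) HLsel))).
    + pose proof (selfish_limsup_le N pmin pmax beta p r0 D0 sel hp hbeta hprice hr0 hsel
                    Lsel HLsel). lra.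
Qed.
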